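(* Consider the sub-$\ell^\infty$ structure on $\mathbb{R}^2$ defined by $Y_1=\partial_x+x\partial_y$, $Y_2=\partial_x-x\partial_y$. If an extremal pair $(\lambda,\gamma)$ on $[0,T]$ has a regular arc, then $\gamma$ is a regular bang-bang trajectory. Moreover, there is $s>0$ such that all its arcs have length (duration) $s$, except possibly the first and the last arc, whose lengths are at most $s$. At consecutive junctions between regular arcs, the components $u_1$ and $u_2$ of the control change sign alternately.
   Context: Sub-$\ell^\infty$ structure defined by smooth vector fields $X_1,\dots,X_k$ on a manifold $M$ (here $X_1=Y_1$, $X_2=Y_2$): an admissible trajectory is an absolutely continuous curve $\gamma:[0,T]\to M$ together with a measurable control $u=(u_1,\dots,u_k):[0,T]\to\mathbb{R}^k$ with $|u_i(t)|\le1$ for all $i$ and a.e. $t$, such that $\dot\gamma(t)=\sum_i u_i(t)X_i(\gamma(t))$ for a.e. $t$. An extremal pair is a pair $(\lambda,\gamma)$ where $\gamma$ is admissible with control $u$ and $\lambda:[0,T]\to T^*M$ is absolutely continuous with $\lambda(t)\in T^*_{\gamma(t)}M\setminus\{0\}$, such that, with $\mathcal H(\lambda,p,u)=\sum_i u_i\langle\lambda,X_i(p)\rangle$, in canonical coordinates $\dot\lambda=-\partial_p\mathcal H(\lambda,\gamma,u)$, $\dot\gamma=\partial_\lambda\mathcal H(\lambda,\gamma,u)$ a.e., and there is a constant $\lambda_0\ge0$ with $\sum_iu_i(t)\langle\lambda(t),X_i(\gamma(t))\rangle=\sum_i|\langle\lambda(t),X_i(\gamma(t))\rangle|=\lambda_0$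 for a.e. $t$; $\gamma$ is then an extremal trajectory and $\lambda$ an extremal lift. The switching functions are $\varphi_j(t)=\langle\lambda(t),X_j(\gamma(t))\rangle$. The restriction of an extremal pair to an open interval $I$ is a regular arc if $\varphi_j(t)\ne0$ for all $t\in I$ and all $j$; arcs are taken maximal (not contained in a strictly larger open interval with the same property). A regular bang-bang trajectory is an extremal trajectory with an extremal lift such that $[0,T]$ minus finitely many points is a finite union of maximal regular arcs (on each of which the control is then constant with values in $\{1,-1\}^k$); these are its arcs. *)

From Stdlib Require Import Reals.
Open Scope R_scope.

Fixpoint rsum (f : nat -> R) (n : nat) : R :=
  match n with O => 0 | S k => rsum f k + f k end.

Definition null_set (N : R -> Prop) : Prop :=
  forall eps, 0 < eps ->
    exists a b : nat -> R,
      (forall k, a k <= b k) /\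
      (forall x, N x -> exists k, a k < x < b k) /\
      (forall m, rsum (fun k => b k - a k) m <= eps).

Definition ae_on (lo hi : R) (P : R -> Prop) : Prop :=
  exists N, null_set N /\ forall t, lo <= t <= hi -> ~ N t -> P t.

Definition outer_le (E : R -> Prop) (r : R) : Prop :=
  forall eps, 0 < eps ->
    exists a b : nat -> R,
      (forall k, a k <= b k) /\
      (forall x, E x -> exists k, a k < x < b k) /\
      (forall m, rsum (fun k => b k - a k) m <= r + eps).

Definition open_set (G : R -> Prop) : Prop :=
  forall x, G x -> exists d, 0 < d /\ forall y, Rabs (y - x) < d -> G y.

Definition leb_measurable (E : R -> Prop) : Prop :=
  forall eps, 0 < eps ->
    exists G, open_set G /\ (forall x, E x -> G x) /\
              outer_le (fun x => G x /\ ~ E x) eps.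

Definition measurable_on (T : R) (f : R -> R) : Prop :=
  forall c, leb_measurable (fun t => 0 <= t <= T /\ f t < c).

Definition abs_cont_on (T : R) (f : R -> R) : Prop :=
  forall eps, 0 < eps -> exists delta, 0 < delta /\
    forall (n : nat) (a b : nat -> R),
      (forall i, (i < n)%nat -> 0 <= a i <= b i /\ b i <= T) ->
      (forall i j, (i < n)%nat -> (j < n)%nat -> i <> j -> b i <= a j \/ b j <= a i) ->
      rsum (fun i => b i - a i) n < delta ->
      rsum (fun i => Rabs (f (b i) - f (a i))) n < eps.

(* points and covectors of R^2 = T^*R^2 fibres, in canonical coordinates *)
Definition pairing (l v : R * R) : R := fst l * fst v + snd l * snd v.

Definition Y1 (p : R * R) : R * R := (1, fst p).
Definition Y2 (p : R * R) : R * R := (1, - fst p).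

Definition Ham (l p u : R * R) : R :=
  fst u * pairing l (Y1 p) + snd u * pairing l (Y2 p).

Definition admissible (T : R) (gamma u : R -> R * R) : Prop :=
  abs_cont_on T (fun t => fst (gamma t)) /\
  abs_cont_on T (fun t => snd (gamma t)) /\
  measurable_on T (fun t => fst (u t)) /\
  measurable_on T (fun t => snd (u t)) /\
  ae_on 0 T (fun t => Rabs (fst (u t)) <= 1 /\ Rabs (snd (u t)) <= 1) /\
  ae_on 0 T (fun t =>
     derivable_pt_lim (fun s => fst (gamma s)) t
        (fst (u t) * fst (Y1 (gamma t)) + snd (u t) * fst (Y2 (gamma t))) /\
     derivable_pt_lim (fun s => snd (gamma s)) t
        (fst (u t) * snd (Y1 (gamma t)) + snd (u t) * snd (Y2 (gamma t)))).

(* Hamiltonian system in canonical coordinates, at time t: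
   lambda' = - d_p H,  gamma' = d_lambda H *)
Definition hamiltonian_eqs (gamma u lam : R -> R * R) (t : R) : Prop :=
  let l := lam t in let p := gamma t in let v := u t in
  exists dx dy dl1 dl2 : R,
    derivable_pt_lim (fun x => Ham l (x, snd p) v) (fst p) dx /\
    derivable_pt_lim (fun y => Ham l (fst p, y) v) (snd p) dy /\
    derivable_pt_lim (fun a => Ham (a, snd l) p v) (fst l) dl1 /\
    derivable_pt_lim (fun b => Ham (fst l, b) p v) (snd l) dl2 /\
    derivable_pt_lim (fun s => fst (lam s)) t (- dx) /\
    derivable_pt_lim (fun s => snd (lam s)) t (- dy) /\
    derivable_pt_lim (fun s => fst (gamma s)) t dl1 /\
    derivable_pt_lim (fun s => snd (gamma s)) t dl2.

Definition phi1 (gamma lam : R -> R * R) (t : R) : R := pairing (lam t) (Y1 (gamma t)).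
Definition phi2 (gamma lam : R -> R * R) (t : R) : R := pairing (lam t) (Y2 (gamma t)).

Definition extremal_pair (T : R) (gamma u lam : R -> R * R) : Prop :=
  admissible T gamma u /\
  abs_cont_on T (fun t => fst (lam t)) /\
  abs_cont_on T (fun t => snd (lam t)) /\
  (forall t, 0 <= t <= T -> lam t <> (0, 0)) /\
  ae_on 0 T (hamiltonian_eqs gamma u lam) /\
  exists lam0, 0 <= lam0 /\
    ae_on 0 T (fun t =>
       Ham (lam t) (gamma t) (u t) = lam0 /\
       Rabs (phi1 gamma lam t) + Rabs (phi2 gamma lam t) = lam0).

Definition regular_on (T : R) (gamma lam : R -> R * R) (a b : R) : Prop :=
  0 <= a /\ a < b /\ b <= T /\
  forall t, a < t < b -> phi1 gamma lam t <> 0 /\ phi2 gamma lam t <> 0.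

Definition regular_arc (T : R) (gamma lam : R -> R * R) (a b : R) : Prop :=
  regular_on T gamma lam a b /\
  forall a' b', a' <= a -> b <= b' -> regular_on T gamma lam a' b' ->
    a' = a /\ b' = b.

(* [0,T] minus the finitely many points t_1,...,t_{n-1} is the union of the
   maximal regular arcs (t_i, t_{i+1}), i < n, with 0 = t_0 < ... < t_n = T *)
Definition arc_decomposition (T : R) (gamma lam : R -> R * R)
    (n : nat) (tt : nat -> R) : Prop :=
  (1 <= n)%nat /\ tt O = 0 /\ tt n = T /\
  (forall i, (i < n)%nat -> regular_arc T gamma lam (tt i) (tt (S i))).

Definition regular_bang_bang (T : R) (gamma : R -> R * R) : Prop :=
  exists u lam n tt, extremal_pair T gamma u lam /\ arc_decomposition T gamma lam n tt.

Definition pm1 (c : R * R) : Prop :=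
  (fst c = 1 \/ fst c = -1) /\ (snd c = 1 \/ snd c = -1).

(* Along an extremal the covector component [lam2] is a first integral; writing [L] for it, the
   switching functions satisfy [phi1' = 2 L u2] and [phi2' = - 2 L u1], while the maximum
   condition forces [u_i = sgn phi_i] wherever [phi_i <> 0] and [|phi1| + |phi2| = lam0], with
   [lam0 > 0] because a regular arc exists. On a regular arc both switching functions are thus
   affine: one of [|phi1|], [|phi2|] grows and the other decreases at rate [2 |L|]. An arc starting
   at a zero of one switching function therefore ends at a zero of the other, after time
   [lam0 / (2 |L|)]; this gives the equal durations and the alternation, and at a zero of [phi_i]
   only [u_i] changes sign. If [L = 0] the switching functions are constant and [[0, T]] is a
   single arc. The only measure-theoretic input is that an absolutely continuous function with
   derivative [K] off a null set is affine of slope [K], proved by creeping along the interval. *)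

From Stdlib Require Import Reals Lra Lia Classical.
Open Scope R_scope.

Lemma Rabs_le_between x r : Rabs x <= r <-> -r <= x <= r.
Proof. unfold Rabs; destruct (Rcase_abs x); split; intros; lra. Qed.

(** * Finite sums and null sets *)

Lemma rsum_ext f g n : (forall i, (i < n)%nat -> f i = g i) -> rsum f n = rsum g n.
Proof.
  induction n as [|n IH]; simpl; intros H; [reflexivity|].
  rewrite IH by (intros; apply H; lia). rewrite H by lia. reflexivity.
Qed.

Lemma rsum_le f g n : (forall i, (i < n)%nat -> f i <= g i) -> rsum f n <= rsum g n.
Proof.
  induction n as [|n IH]; simpl; intros H; [lra|].
  assert (f n <= g n) by (apply H; lia).
  assert (rsum f n <= rsum g n) by (apply IH; intros; apply H; lia).
  lra.
Qed.

Lemma rsum_le_length f m n : (forall i, 0 <= f i) -> (m <= n)%nat -> rsum f m <= rsum f n.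
Proof. intros H Hmn; induction Hmn; simpl; [lra|]. specialize (H m0); lra. Qed.

Lemma rsum_plus f g n : rsum (fun i => f i + g i) n = rsum f n + rsum g n.
Proof. induction n; simpl; [lra|]. rewrite IHn; lra. Qed.

Lemma rsum_scal c f n : rsum (fun i => c * f i) n = c * rsum f n.
Proof. induction n; simpl; [lra|]. rewrite IHn; lra. Qed.

Lemma rsum_le_gap f g n k c : (k < n)%nat -> (forall i, (i < n)%nat -> f i <= g i) ->
  f k + c <= g k -> rsum f n + c <= rsum g n.
Proof.
  induction n as [|n IH]; simpl; intros Hk Hfg Hc; [lia|].
  destruct (Nat.eq_dec k n) as [->|Hne].
  - assert (rsum f n <= rsum g n) by (apply rsum_le; intros; apply Hfg; lia). lra.
  - assert (rsum f n + c <= rsum g n) by (apply IH; auto; lia).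
    assert (f n <= g n) by (apply Hfg; lia). lra.
Qed.

Definition interleave (f g : nat -> R) (k : nat) : R :=
  if Nat.even k then f (Nat.div2 k) else g (Nat.div2 k).

Lemma rsum_interleave f g m : rsum (interleave f g) (2 * m) = rsum f m + rsum g m.
Proof.
  induction m as [|m IH]; simpl; [lra|].
  replace (m + S (m + 0))%nat with (S (2 * m)) by lia. simpl.
  replace (m + (m + 0))%nat with (2 * m)%nat in * by lia.
  rewrite IH. unfold interleave.
  replace (S (2 * m)) with (2 * m + 1)%nat by lia.
  rewrite Nat.even_even, Nat.even_odd, Nat.div2_double, Nat.div2_odd'. lra.
Qed.

Lemma null_set_union N1 N2 :
  null_set N1 -> null_set N2 -> null_set (fun x => N1 x \/ N2 x).
Proof.
  intros H1 H2 eps Heps.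
  destruct (H1 (eps / 2)) as (a1 & b1 & Hab1 & Hc1 & Hs1); [lra|].
  destruct (H2 (eps / 2)) as (a2 & b2 & Hab2 & Hc2 & Hs2); [lra|].
  exists (interleave a1 a2), (interleave b1 b2). split; [|split].
  - intros k; unfold interleave; destruct (Nat.even k); auto.
  - intros x [Hx|Hx].
    + destruct (Hc1 x Hx) as [k Hk]. exists (2 * k)%nat.
      unfold interleave. rewrite Nat.even_even, Nat.div2_double. auto.
    + destruct (Hc2 x Hx) as [k Hk]. exists (2 * k + 1)%nat.
      unfold interleave. rewrite Nat.even_odd, Nat.div2_odd'. auto.
  - intros m.
    set (len := interleave (fun k => b1 k - a1 k) (fun k => b2 k - a2 k)).
    rewrite (rsum_ext _ len) by (intros i _; unfold len, interleave; destruct (Nat.even i); auto).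
    assert (Hlen : rsum len m <= rsum len (2 * m)).
    { apply rsum_le_length; [|lia]. intros i; unfold len, interleave.
      destruct (Nat.even i); [specialize (Hab1 (Nat.div2 i))|specialize (Hab2 (Nat.div2 i))]; lra. }
    unfold len in Hlen at 2. rewrite rsum_interleave in Hlen.
    specialize (Hs1 m). specialize (Hs2 m). lra.
Qed.

Lemma null_set_singleton x : null_set (fun y => y = x).
Proof.
  intros eps Heps.
  exists (fun k => match k with O => x - eps / 4 | S _ => x end).
  exists (fun k => match k with O => x + eps / 4 | S _ => x end).
  split; [|split].
  - intros [|k]; lra.
  - intros y ->. exists O. lra.
  - intros m. induction m as [|[|m] IH]; simpl in *; lra.
Qed.

Lemma null_set_add_points N x y : null_set N -> null_set (fun t => N t \/ t = x \/ t = y).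
Proof.
  intros HN. apply null_set_union; [|apply null_set_union]; auto using null_set_singleton.
Qed.

(** * Absolutely continuous functions *)

Lemma abs_cont_on_ext T f g :
  (forall t, 0 <= t <= T -> f t = g t) -> abs_cont_on T f -> abs_cont_on T g.
Proof.
  intros Hfg H eps Heps. destruct (H eps Heps) as (d & Hd & Hf). exists d; split; auto.
  intros n a b Hab Hdis Hs.
  rewrite (rsum_ext _ (fun i => Rabs (f (b i) - f (a i)))); [apply (Hf n a b); auto|].
  intros i Hi. destruct (Hab i Hi). rewrite !Hfg by lra. reflexivity.
Qed.

Lemma abs_cont_on_plus T f g :
  abs_cont_on T f -> abs_cont_on T g -> abs_cont_on T (fun t => f t + g t).
Proof.
  intros Hf Hg eps Heps.
  destruct (Hf (eps / 2)) as (d1 & Hd1 & Hf1); [lra|].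
  destruct (Hg (eps / 2)) as (d2 & Hd2 & Hg2); [lra|].
  exists (Rmin d1 d2); split; [apply Rmin_glb_lt; auto|].
  intros n a b Hab Hdis Hs.
  pose proof (Rmin_l d1 d2). pose proof (Rmin_r d1 d2).
  specialize (Hf1 n a b Hab Hdis ltac:(lra)). specialize (Hg2 n a b Hab Hdis ltac:(lra)).
  eapply Rle_lt_trans.
  - apply (rsum_le _ (fun i => Rabs (f (b i) - f (a i)) + Rabs (g (b i) - g (a i)))).
    intros i _. eapply Rle_trans; [|apply Rabs_triang]. right; f_equal; ring.
  - rewrite rsum_plus. lra.
Qed.

Lemma abs_cont_on_scal T c f : abs_cont_on T f -> abs_cont_on T (fun t => c * f t).
Proof.
  intros Hf eps Heps.
  assert (Hc : 0 < Rabs c + 1) by (pose proof (Rabs_pos c); lra).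
  destruct (Hf (eps / (Rabs c + 1))) as (d & Hd & Hfd); [apply Rdiv_lt_0_compat; lra|].
  exists d; split; auto. intros n a b Hab Hdis Hs.
  specialize (Hfd n a b Hab Hdis Hs).
  set (S := rsum (fun i => Rabs (f (b i) - f (a i))) n) in Hfd.
  rewrite (rsum_ext _ (fun i => Rabs c * Rabs (f (b i) - f (a i)))), rsum_scal.
  2:{ intros i _. rewrite <- Rabs_mult. f_equal. ring. }
  fold S.
  assert (Rabs c * S <= Rabs c * (eps / (Rabs c + 1)))
    by (apply Rmult_le_compat_l; [apply Rabs_pos|lra]).
  assert (Rabs c * (eps / (Rabs c + 1)) < eps).
  { apply (Rmult_lt_reg_r (Rabs c + 1)); auto. field_simplify; lra. }
  lra.
Qed.

Lemma abs_cont_on_id T : abs_cont_on T (fun t => t).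
Proof.
  intros eps Heps. exists eps; split; auto. intros n a b Hab _ Hs.
  rewrite (rsum_ext _ (fun i => b i - a i)); auto.
  intros i Hi. destruct (Hab i Hi). rewrite Rabs_right; lra.
Qed.

Lemma abs_cont_on_continuous T f : abs_cont_on T f ->
  forall t, 0 <= t <= T -> forall eps, 0 < eps -> exists d, 0 < d /\
    forall s, 0 <= s <= T -> Rabs (s - t) < d -> Rabs (f s - f t) < eps.
Proof.
  intros H t Ht eps Heps. destruct (H eps Heps) as (d & Hd & Hf). exists d; split; auto.
  intros s Hs Hst.
  destruct (Rle_dec t s).
  - specialize (Hf 1%nat (fun _ => t) (fun _ => s)). simpl in Hf.
    rewrite Rabs_right in Hst by lra.
    enough (0 + Rabs (f s - f t) < eps) by lra.
    apply Hf; intros; lra || lia.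
  - specialize (Hf 1%nat (fun _ => s) (fun _ => t)). simpl in Hf.
    rewrite Rabs_left in Hst by lra. rewrite Rabs_minus_sym.
    enough (0 + Rabs (f t - f s) < eps) by lra.
    apply Hf; intros; lra || lia.
Qed.

(* [f (clamp T t)] extends [f] from [0, T] to the whole line, so that results stated for
   [continuity] apply. *)
Definition clamp (T t : R) : R := Rmax 0 (Rmin T t).

Lemma clamp_between T t : 0 <= T -> 0 <= clamp T t <= T.
Proof. intros; unfold clamp, Rmax, Rmin; repeat destruct Rle_dec; lra. Qed.

Lemma clamp_id T t : 0 <= t <= T -> clamp T t = t.
Proof. intros; unfold clamp, Rmax, Rmin; repeat destruct Rle_dec; lra. Qed.

Lemma clamp_lipschitz T s t : 0 <= T -> Rabs (clamp T s - clamp T t) <= Rabs (s - t).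
Proof.
  intros; unfold clamp, Rmax, Rmin; repeat destruct Rle_dec; apply Rabs_le_between;
  unfold Rabs; destruct Rcase_abs; lra.
Qed.

Lemma abs_cont_on_clamp_continuity T f :
  0 <= T -> abs_cont_on T f -> continuity (fun t => f (clamp T t)).
Proof.
  intros HT Hf x eps Heps.
  destruct (abs_cont_on_continuous T f Hf (clamp T x) (clamp_between T x HT) eps Heps)
    as (d & Hd & Hfd).
  exists d; split; auto. intros y [_ Hy]. simpl in *; unfold Rdist in *.
  apply Hfd; [apply clamp_between; auto|].
  eapply Rle_lt_trans; [apply clamp_lipschitz|]; auto.
Qed.

Lemma continuity_pt_neq f x c : continuity_pt f x -> f x <> c ->
  exists d, 0 < d /\ forall y, Rabs (y - x) < d -> f y <> c.
Proof.
  intros Hf Hne. destruct (Hf (Rabs (f x - c))) as (d & Hd & Hfd).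
  { apply Rabs_pos_lt; lra. }
  exists d; split; auto. intros y Hy Heq.
  destruct (Req_dec y x) as [->|Hyx]; [contradiction|].
  specialize (Hfd y (conj (conj I (not_eq_sym Hyx)) Hy)). simpl in Hfd; unfold Rdist in Hfd.
  rewrite Heq, Rabs_minus_sym in Hfd. lra.
Qed.

Lemma abs_cont_on_nonzero_near T f p : abs_cont_on T f -> 0 <= p <= T -> f p <> 0 ->
  exists d, 0 < d /\ forall t, 0 <= t <= T -> Rabs (t - p) < d -> f t <> 0.
Proof.
  intros Hf Hp Hfp.
  destruct (abs_cont_on_continuous T f Hf p Hp (Rabs (f p))) as (d & Hd & Hfd).
  { apply Rabs_pos_lt; auto. }
  exists d; split; auto. intros t Ht Htp Hft.
  specialize (Hfd t Ht Htp). rewrite Hft, Rminus_0_l, Rabs_Ropp in Hfd. lra.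
Qed.

Lemma abs_cont_on_nonzero_right T f p : abs_cont_on T f -> 0 <= p < T -> f p <> 0 ->
  exists q, p < q <= T /\ forall t, p < t < q -> f t <> 0.
Proof.
  intros Hf Hp Hfp.
  destruct (abs_cont_on_nonzero_near T f p Hf ltac:(lra) Hfp) as (d & Hd & Hnz).
  exists (p + Rmin d (T - p) / 2).
  assert (0 < Rmin d (T - p)) by (apply Rmin_glb_lt; lra).
  pose proof (Rmin_l d (T - p)). pose proof (Rmin_r d (T - p)).
  split; [lra|]. intros t Ht. apply Hnz; [lra|]. rewrite Rabs_right; lra.
Qed.

Lemma derivable_pt_lim_0_bound f x : derivable_pt_lim f x 0 -> forall eps, 0 < eps ->
  exists d, 0 < d /\ forall y, Rabs (y - x) < d -> Rabs (f y - f x) <= eps * Rabs (y - x).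
Proof.
  intros H eps Heps. destruct (H eps Heps) as [[d Hd] Hf]. exists d; split; auto.
  intros y Hy. destruct (Req_dec y x) as [->|Hne].
  - rewrite !Rminus_diag, Rabs_R0. lra.
  - specialize (Hf (y - x) ltac:(lra) Hy). simpl in Hf.
    replace (x + (y - x)) with y in Hf by ring.
    replace (f y - f x) with ((y - x) * ((f y - f x) / (y - x) - 0)) by (field; lra).
    rewrite Rabs_mult, (Rmult_comm eps). apply Rmult_le_compat_l; [apply Rabs_pos|lra].
Qed.

Lemma is_lub_approx E s : is_lub E s -> forall eps, 0 < eps ->
  exists x, E x /\ s - eps < x <= s.
Proof.
  intros [Hub Hl] eps Heps. apply NNPP. intros Hn.
  enough (s <= s - eps) by lra. apply Hl. intros x Hx.
  destruct (Rle_dec x (s - eps)); auto. exfalso. apply Hn. exists x. split; auto.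
  split; [lra|]. apply Hub; auto.
Qed.

Section ZeroDerivative.

Variables (T : R) (f : R -> R) (N : R -> Prop) (p q : R).
Hypothesis f_ac : abs_cont_on T f.
Hypotheses (p_ge0 : 0 <= p) (p_le_q : p <= q) (q_leT : q <= T).
Hypothesis N_null : null_set N.
Hypothesis f_deriv0 : forall t, p < t < q -> ~ N t -> derivable_pt_lim f t 0.

Section Creep.

(* Creeping from [p] to [q]: off the cover [(a k, b k)] of the bad set, the increment of [f]
   is at most [e] times the length travelled; across a cover interval it is absorbed by the
   variation of [f] on a disjoint family of subintervals whose total length is dominated by
   the lengths of the cover intervals crossed so far. *)
Variables (e : R) (a b : nat -> R).
Hypotheses (e_ge0 : 0 <= e) (a_le_b : forall k, a k <= b k).

Definition crossed_length (x : R) (k : nat) : R :=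
  if Rle_dec (Rmin (b k) q) x then b k - a k else 0.

Definition creep (x : R) : Prop :=
  p <= x <= q /\
  exists (n : nat) (al be : nat -> R) (m : nat),
    (forall i, (i < n)%nat -> p <= al i <= be i /\ be i <= x) /\
    (forall i j, (i < n)%nat -> (j < n)%nat -> i <> j -> be i <= al j \/ be j <= al i) /\
    rsum (fun i => be i - al i) n <= rsum (crossed_length x) m /\
    f x - f p <= e * (x - p) + rsum (fun i => Rabs (f (be i) - f (al i))) n.

Lemma crossed_length_mono x y k : x <= y -> crossed_length x k <= crossed_length y k.
Proof.
  intros Hxy. specialize (a_le_b k). unfold crossed_length.
  repeat destruct Rle_dec; lra.
Qed.

Lemma creep_start : creep p.
Proof.
  split; [lra|]. exists O, (fun _ => 0), (fun _ => 0), O.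
  repeat split; intros; try lia; simpl; lra.
Qed.

Lemma creep_slow x y : creep x -> x <= y <= q -> f y - f x <= e * (y - x) -> creep y.
Proof.
  intros [Hx (n & al & be & m & Hin & Hdis & Hlen & Hf)] Hy Hfy.
  split; [lra|]. exists n, al, be, m. split; [|split; [|split]]; auto.
  - intros i Hi. destruct (Hin i Hi). lra.
  - eapply Rle_trans; [apply Hlen|]. apply rsum_le. intros i _. apply crossed_length_mono. lra.
  - lra.
Qed.

Lemma creep_cross x k : creep x -> a k < x -> x < Rmin (b k) q -> creep (Rmin (b k) q).
Proof.
  intros [Hx (n & al & be & m & Hin & Hdis & Hlen & Hf)] Hak Hxk.
  set (y := Rmin (b k) q) in *.
  pose proof (Rmin_l (b k) q) as Hyb. pose proof (Rmin_r (b k) q) as Hyq. fold y in Hyb, Hyq.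
  split; [lra|].
  set (al' := fun i => if Nat.eqb i n then x else al i).
  set (be' := fun i => if Nat.eqb i n then y else be i).
  assert (Eold : forall g : R -> R -> R,
    rsum (fun i => g (be' i) (al' i)) n = rsum (fun i => g (be i) (al i)) n).
  { intros g. apply rsum_ext. intros i Hi. unfold al', be'.
    destruct (Nat.eqb_spec i n); [lia|reflexivity]. }
  assert (Enew : forall g : R -> R -> R, g (be' n) (al' n) = g y x).
  { intros g. unfold al', be'. rewrite Nat.eqb_refl. reflexivity. }
  exists (S n), al', be', (Nat.max m (S k)). split; [|split; [|split]].
  - intros i Hi. unfold al', be'. destruct (Nat.eqb_spec i n); [lra|].
    destruct (Hin i ltac:(lia)); lra.
  - intros i j Hi Hj Hij. unfold al', be'.
    destruct (Nat.eqb_spec i n), (Nat.eqb_spec j n); try lia.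
    + right. destruct (Hin j ltac:(lia)); lra.
    + left. destruct (Hin i ltac:(lia)); lra.
    + apply Hdis; lia.
  - simpl. rewrite (Eold (fun u v => u - v)), (Enew (fun u v => u - v)).
    assert (Hlong : rsum (crossed_length x) m <= rsum (crossed_length x) (Nat.max m (S k))).
    { apply rsum_le_length; [|lia]. intros j. unfold crossed_length.
      specialize (a_le_b j). destruct Rle_dec; lra. }
    assert (Hk : rsum (crossed_length x) (Nat.max m (S k)) + (b k - a k)
                 <= rsum (crossed_length y) (Nat.max m (S k))).
    { apply rsum_le_gap with k; [lia| |].
      - intros j _. apply crossed_length_mono. lra.
      - unfold crossed_length. fold y.
        destruct (Rle_dec y x); [lra|]. destruct (Rle_dec y y); lra. }
    lra.
  - simpl. rewrite (Eold (fun u v => Rabs (f u - f v))), (Enew (fun u v => Rabs (f u - f v))).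
    pose proof (Rle_abs (f y - f x)).
    assert (e * (x - p) <= e * (y - p)) by (apply Rmult_le_compat_l; lra). lra.
Qed.

End Creep.

(* A bad supremum of the reachable points is crossed through its cover interval; at a good one
   the derivative bound lets the creep go on. Either way the supremum is [q]. *)
Lemma creep_to_end e a b : 0 < e -> (forall k, a k <= b k) ->
  (forall x, N x \/ x = p \/ x = q -> exists k, a k < x < b k) -> creep e a b q.
Proof.
  intros He Hab Hcov.
  destruct (completeness (creep e a b)) as [s Hs].
  { exists q. intros x [Hx _]. lra. }
  { exists p. apply creep_start; lra. }
  assert (Hps : p <= s) by (apply (proj1 Hs), creep_start; lra).
  assert (Hsq : s <= q) by (apply (proj2 Hs); intros x [Hx _]; lra).
  destruct (classic (N s \/ s = p \/ s = q)) as [Hbad|Hgood].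
  - destruct (Hcov s Hbad) as [k Hk].
    destruct (is_lub_approx _ _ Hs (s - a k)) as (x & Hx & Hx1 & Hx2); [lra|].
    destruct (Req_dec x q) as [<-|Hxq]; auto.
    assert (Hxq' : x < q) by (destruct Hx as [Hx _]; lra).
    assert (Hc := creep_cross e a b ltac:(lra) Hab x k Hx ltac:(lra) ltac:(apply Rmin_glb_lt; lra)).
    assert (Hle := proj1 Hs _ Hc).
    unfold Rmin in Hc, Hle. destruct (Rle_dec (b k) q); [lra|auto].
  - exfalso.
    assert (Hs_in : p < s < q) by (split; apply Rnot_le_lt; intro; apply Hgood; right; lra).
    destruct (derivable_pt_lim_0_bound f s (f_deriv0 s Hs_in ltac:(tauto)) e He)
      as (d & Hd & Hfd).
    destruct (is_lub_approx _ _ Hs d Hd) as (x & Hx & Hx1 & Hx2).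
    set (y := Rmin (s + d / 2) q).
    assert (Hy : s < y <= s + d / 2 /\ y <= q).
    { unfold y, Rmin; destruct Rle_dec; lra. }
    assert (Hc : creep e a b y).
    { apply (creep_slow e a b Hab x); [auto|lra|].
      assert (B1 := Hfd y ltac:(rewrite Rabs_right; lra)).
      assert (B2 := Hfd x ltac:(rewrite Rabs_left1; lra)).
      rewrite (Rabs_right (y - s)) in B1 by lra. rewrite (Rabs_left1 (x - s)) in B2 by lra.
      apply Rabs_le_between in B1. apply Rabs_le_between in B2. nra. }
    assert (Hle := proj1 Hs _ Hc). lra.
Qed.

Lemma abs_cont_on_deriv0_le : f q <= f p.
Proof.
  enough (H : forall e, 0 < e -> f q - f p <= e * (q - p + 1)).
  { apply Rle_plus_epsilon. intros eps Heps.
    specialize (H (eps / (q - p + 1)) ltac:(apply Rdiv_lt_0_compat; lra)).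
    replace (eps / (q - p + 1) * (q - p + 1)) with eps in H by (field; lra). lra. }
  intros e He.
  destruct (f_ac e He) as (delta & Hdelta & Hac).
  destruct (null_set_add_points N p q N_null (delta / 2) ltac:(lra)) as (a & b & Hab & Hcov & Hsum).
  destruct (creep_to_end e a b He Hab Hcov)
    as [_ (n & al & be & m & Hin & Hdis & Hlen & Hf)].
  assert (Hcross : rsum (crossed_length a b q) m <= rsum (fun k => b k - a k) m).
  { apply rsum_le. intros k _. unfold crossed_length. specialize (Hab k).
    destruct Rle_dec; lra. }
  specialize (Hsum m).
  assert (Hvar := Hac n al be ltac:(intros i Hi; destruct (Hin i Hi); lra) Hdis ltac:(lra)).
  lra.
Qed.

End ZeroDerivative.

Lemma abs_cont_on_deriv_const T f N p q K :
  abs_cont_on T f -> 0 <= p -> p <= q -> q <= T -> null_set N ->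
  (forall t, p < t < q -> ~ N t -> derivable_pt_lim f t K) ->
  f q - f p = K * (q - p).
Proof.
  intros Hf Hp Hpq HqT HN Hd.
  set (g := fun t => f t + - K * t).
  assert (Hg : abs_cont_on T g)
    by (apply abs_cont_on_plus; [|apply abs_cont_on_scal, abs_cont_on_id]; auto).
  assert (Hgd : forall t, p < t < q -> ~ N t -> derivable_pt_lim g t 0).
  { intros t Ht HNt. replace 0 with (K + - K * 1) by ring.
    apply (derivable_pt_lim_plus f (fun t => - K * t)); auto.
    apply (derivable_pt_lim_scal id (- K)), derivable_pt_lim_id. }
  assert (H1 := abs_cont_on_deriv0_le T g N p q Hg Hp Hpq HqT HN Hgd).
  assert (H2 : -1 * g q <= -1 * g p).
  { apply (abs_cont_on_deriv0_le T (fun t => -1 * g t) N p q); auto.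
    - apply abs_cont_on_scal; auto.
    - intros t Ht HNt. replace 0 with (-1 * 0) by ring.
      apply (derivable_pt_lim_scal g (-1)); auto. }
  unfold g in *. lra.
Qed.

(* Were [(p, q)] contained in [N], the identity would have derivative [0] off [N] there. *)
Lemma null_set_compl_dense N p q : null_set N -> 0 <= p -> p < q ->
  exists t, p < t < q /\ ~ N t.
Proof.
  intros HN Hp Hpq. apply NNPP. intros Hn.
  assert (H := abs_cont_on_deriv_const q (fun t => t) N p q 0 (abs_cont_on_id q) Hp
                 ltac:(lra) ltac:(lra) HN).
  enough (q - p = 0 * (q - p)) by lra.
  apply H. intros t Ht HNt. exfalso. apply Hn. exists t; auto.
Qed.

(** * Signs and affine functions *)

(* [sgn 0 = -1]: it is only ever applied to nonzero arguments. *)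
Definition sgn (x : R) : R := if Rlt_dec 0 x then 1 else -1.

Lemma sgn_pm1 x : sgn x = 1 \/ sgn x = -1.
Proof. unfold sgn; destruct Rlt_dec; auto. Qed.

Lemma sgn_mul_pos x : x <> 0 -> 0 < sgn x * x.
Proof. intros Hx; unfold sgn; destruct Rlt_dec; lra. Qed.

Lemma sgn_of_mul_pos s x : s = 1 \/ s = -1 -> 0 < s * x -> sgn x = s.
Proof. intros [-> | ->] Hx; unfold sgn; destruct Rlt_dec; lra. Qed.

Lemma sgn_neq_of_mul_neg x y : x * y < 0 -> sgn x <> sgn y.
Proof.
  intros Hxy. unfold sgn; destruct (Rlt_dec 0 x), (Rlt_dec 0 y); try lra; nra.
Qed.

Lemma Rabs_of_sign s x : s = 1 \/ s = -1 -> 0 <= s * x -> Rabs x = s * x.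
Proof. intros [-> | ->] Hx; unfold Rabs; destruct Rcase_abs; lra. Qed.

Lemma bang_of_max v1 v2 a b : Rabs v1 <= 1 -> Rabs v2 <= 1 ->
  v1 * a + v2 * b = Rabs a + Rabs b -> a <> 0 -> v1 = sgn a.
Proof.
  intros Hv1 Hv2 Hmax Ha.
  apply Rabs_le_between in Hv1. apply Rabs_le_between in Hv2.
  assert (v2 * b <= Rabs b) by (unfold Rabs; destruct Rcase_abs; nra).
  unfold sgn, Rabs in *; destruct Rlt_dec, (Rcase_abs a); try lra; nra.
Qed.

Lemma continuity_sign_constant F p q m : continuity F -> p < m < q ->
  (forall t, p < t < q -> F t <> 0) -> forall t, p < t < q -> 0 < sgn (F m) * F t.
Proof.
  intros HF Hm Hnz t Ht.
  set (s := sgn (F m)).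
  assert (Hs : s = 1 \/ s = -1) by apply sgn_pm1.
  assert (Hsm : 0 < s * F m) by (apply sgn_mul_pos, Hnz; auto).
  destruct (Rlt_dec 0 (s * F t)) as [|Hneg]; auto. exfalso.
  assert (Hst : s * F t < 0) by (specialize (Hnz t Ht); destruct Hs as [-> | ->]; lra).
  assert (HsF : continuity (mult_real_fct s F)) by (apply continuity_scal; auto).
  assert (Hzero : forall z, F z = 0 -> ~ (p < z < q)) by (intros z Hz Hzpq; exact (Hnz z Hzpq Hz)).
  destruct (Rlt_le_dec t m) as [Htm|Hmt].
  - destruct (IVT (mult_real_fct s F) t m HsF Htm Hst Hsm) as (z & Hz & Hz0).
    unfold mult_real_fct in Hz0. apply (Hzero z); [|lra].
    destruct Hs as [-> | ->]; lra.
  - assert (Hmt' : m < t) by (destruct (Req_dec t m) as [->|]; lra).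
    destruct (IVT (opp_fct (mult_real_fct s F)) m t (continuity_opp _ HsF) Hmt')
      as (z & Hz & Hz0); unfold opp_fct, mult_real_fct in *; try lra.
    apply (Hzero z); [|lra]. destruct Hs as [-> | ->]; lra.
Qed.

Lemma affine_nonneg_closure g c k p q : p < q ->
  (forall t, p <= t <= q -> g t = c + k * (t - p)) ->
  (forall t, p < t < q -> 0 < g t) -> forall t, p <= t <= q -> 0 <= g t.
Proof.
  intros Hpq Hg Hpos t Ht.
  assert (Hstart : forall c k, (forall t, p < t < q -> 0 < c + k * (t - p)) -> 0 <= c).
  { clear c k Hg. intros c k H.
    destruct (Rle_dec 0 c) as [|Hc]; auto. exfalso.
    set (h := Rmin ((q - p) / 2) (- c / (Rabs k + 1))).
    assert (Hk : 0 < Rabs k + 1) by (pose proof (Rabs_pos k); lra).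
    assert (Hh : 0 < h) by (apply Rmin_glb_lt; [lra|apply Rdiv_lt_0_compat; lra]).
    assert (Hh1 : h <= (q - p) / 2) by apply Rmin_l.
    assert (Hh2 : h * (Rabs k + 1) <= - c).
    { replace (- c) with (- c / (Rabs k + 1) * (Rabs k + 1)) by (field; lra).
      apply Rmult_le_compat_r; [lra|apply Rmin_r]. }
    specialize (H (p + h) ltac:(lra)). replace (p + h - p) with h in H by ring.
    assert (k * h <= Rabs k * h) by (apply Rmult_le_compat_r; [lra|apply Rle_abs]).
    lra. }
  destruct (Req_dec t p) as [->|Htp]; [|destruct (Req_dec t q) as [->|Htq]].
  - rewrite Hg by lra. replace (c + k * (p - p)) with c by ring.
    apply (Hstart c k). intros x Hx. rewrite <- Hg by lra. auto.
  - rewrite Hg by lra. apply (Hstart _ (- k)). intros x Hx.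
    replace (c + k * (q - p) + - k * (x - p)) with (c + k * (p + q - x - p)) by ring.
    rewrite <- Hg by lra. apply Hpos; lra.
  - apply Rlt_le, Hpos; lra.
Qed.

(** * The switching system *)

(* The reduced Pontryagin system along an extremal: [lam2 = L] is constant, the Hamiltonian has
   the constant value [lam0] and maximizes [u1 phi1 + u2 phi2], and [phi1' = 2 L u2],
   [phi2' = - 2 L u1]. Exchanging the two switching functions and replacing [L] by [- L] preserves
   it, which halves the work below. *)
Record switching_system (T : R) (phi1 phi2 u1 u2 : R -> R) (N : R -> Prop) (L lam0 : R)
  : Prop := {
  sw_T_pos : 0 < T;
  sw_null : null_set N;
  sw_lam0_pos : 0 < lam0;
  sw_ac1 : abs_cont_on T phi1;
  sw_ac2 : abs_cont_on T phi2;
  sw_norm : forall t, 0 <= t <= T -> Rabs (phi1 t) + Rabs (phi2 t) = lam0;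
  sw_max : forall t, 0 <= t <= T -> ~ N t ->
    Rabs (u1 t) <= 1 /\ Rabs (u2 t) <= 1 /\ u1 t * phi1 t + u2 t * phi2 t = lam0;
  sw_deriv1 : forall t, 0 < t < T -> ~ N t -> derivable_pt_lim phi1 t (2 * L * u2 t);
  sw_deriv2 : forall t, 0 < t < T -> ~ N t -> derivable_pt_lim phi2 t (- (2 * L * u1 t)) }.

Arguments sw_T_pos {T phi1 phi2 u1 u2 N L lam0}.
Arguments sw_null {T phi1 phi2 u1 u2 N L lam0}.
Arguments sw_lam0_pos {T phi1 phi2 u1 u2 N L lam0}.
Arguments sw_ac1 {T phi1 phi2 u1 u2 N L lam0}.
Arguments sw_ac2 {T phi1 phi2 u1 u2 N L lam0}.
Arguments sw_norm {T phi1 phi2 u1 u2 N L lam0}.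
Arguments sw_max {T phi1 phi2 u1 u2 N L lam0}.
Arguments sw_deriv1 {T phi1 phi2 u1 u2 N L lam0}.
Arguments sw_deriv2 {T phi1 phi2 u1 u2 N L lam0}.

Lemma switching_system_swap {T phi1 phi2 u1 u2 N L lam0} :
  switching_system T phi1 phi2 u1 u2 N L lam0 -> switching_system T phi2 phi1 u2 u1 N (- L) lam0.
Proof.
  intros [HT HN Hl0 Hac1 Hac2 Hnorm Hmax Hd1 Hd2]. split; auto.
  - intros t Ht. rewrite Rplus_comm. auto.
  - intros t Ht HNt. destruct (Hmax t Ht HNt) as (? & ? & ?). repeat split; auto. lra.
  - intros t Ht HNt. replace (2 * - L * u1 t) with (- (2 * L * u1 t)) by ring. auto.
  - intros t Ht HNt. replace (- (2 * - L * u2 t)) with (2 * L * u2 t) by ring. auto.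
Qed.

Definition regular_interval (phi1 phi2 : R -> R) (p q : R) : Prop :=
  forall t, p < t < q -> phi1 t <> 0 /\ phi2 t <> 0.

Definition switching_time (phi1 phi2 : R -> R) (t : R) : Prop := phi1 t = 0 \/ phi2 t = 0.

Lemma regular_interval_swap phi1 phi2 p q :
  regular_interval phi1 phi2 p q -> regular_interval phi2 phi1 p q.
Proof. intros H t Ht. destruct (H t Ht). auto. Qed.

Definition mid (p q : R) : R := (p + q) / 2.

Section OneSide.

Context {T : R} {phi1 phi2 u1 u2 : R -> R} {N : R -> Prop} {L lam0 : R}.
Hypothesis sys : switching_system T phi1 phi2 u1 u2 N L lam0.

Lemma u2_bang t : 0 <= t <= T -> ~ N t -> phi2 t <> 0 -> u2 t = sgn (phi2 t).
Proof.
  intros Ht HNt Hnz. destruct (sw_max sys t Ht HNt) as (Hu1 & Hu2 & Hmax).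
  apply (bang_of_max (u2 t) (u1 t) (phi2 t) (phi1 t)); auto.
  rewrite Rplus_comm, Hmax, Rplus_comm. symmetry. apply (sw_norm sys t Ht).
Qed.

Variables p q : R.
Hypotheses (p_ge0 : 0 <= p) (p_lt_q : p < q) (q_leT : q <= T).
Hypothesis phi2_nz : forall t, p < t < q -> phi2 t <> 0.

Lemma phi2_sign_on m : p < m < q -> forall t, p < t < q -> 0 < sgn (phi2 m) * phi2 t.
Proof.
  intros Hm t Ht.
  assert (Hclamp : forall x, p <= x <= q -> phi2 (clamp T x) = phi2 x)
    by (intros x Hx; rewrite clamp_id; auto; lra).
  rewrite <- (Hclamp m), <- (Hclamp t) by lra.
  apply (continuity_sign_constant (fun x => phi2 (clamp T x)) p q); auto.
  - apply abs_cont_on_clamp_continuity; [lra|apply (sw_ac2 sys)].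
  - intros x Hx. rewrite Hclamp by lra. auto.
Qed.

Lemma u2_on m : p < m < q -> forall t, p < t < q -> ~ N t -> u2 t = sgn (phi2 m).
Proof.
  intros Hm t Ht HNt. rewrite (u2_bang t) by (auto; lra).
  apply sgn_of_mul_pos; [apply sgn_pm1|]. apply phi2_sign_on; auto.
Qed.

Lemma phi1_affine m : p < m < q ->
  forall t, p <= t <= q -> phi1 t = phi1 p + 2 * L * sgn (phi2 m) * (t - p).
Proof.
  intros Hm t Ht.
  enough (phi1 t - phi1 p = 2 * L * sgn (phi2 m) * (t - p)) by lra.
  apply (abs_cont_on_deriv_const T phi1 N p t); try lra.
  - apply (sw_ac1 sys).
  - apply (sw_null sys).
  - intros r Hr HNr. rewrite <- (u2_on m Hm r) by (auto; lra).
    apply (sw_deriv1 sys); auto; lra.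
Qed.

End OneSide.

Section TwoSided.

Context {T : R} {phi1 phi2 u1 u2 : R -> R} {N : R -> Prop} {L lam0 : R}.
Hypothesis sys : switching_system T phi1 phi2 u1 u2 N L lam0.

Let sys' : switching_system T phi2 phi1 u2 u1 N (- L) lam0 :=
  switching_system_swap sys.

Lemma switching_not_both t : 0 <= t <= T -> phi1 t = 0 -> phi2 t <> 0.
Proof.
  intros Ht H1 H2. pose proof (sw_norm sys t Ht) as Hn.
  pose proof (sw_lam0_pos sys).
  rewrite H1, H2, Rabs_R0 in Hn. lra.
Qed.

Section Arc.

Variables p q : R.
Hypotheses (p_ge0 : 0 <= p) (p_lt_q : p < q) (q_leT : q <= T).
Hypothesis reg : regular_interval phi1 phi2 p q.

Let s1 := sgn (phi1 (mid p q)).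
Let s2 := sgn (phi2 (mid p q)).

Let mid_between : p < mid p q < q.
Proof. unfold mid; lra. Qed.

Let phi1_nz t : p < t < q -> phi1 t <> 0.
Proof. apply reg. Qed.

Let phi2_nz t : p < t < q -> phi2 t <> 0.
Proof. apply reg. Qed.

Lemma regular_phi_affine t : p <= t <= q ->
  phi1 t = phi1 p + 2 * L * s2 * (t - p) /\ phi2 t = phi2 p - 2 * L * s1 * (t - p).
Proof.
  intros Ht. split.
  - exact (phi1_affine sys p q p_ge0 p_lt_q q_leT phi2_nz _ mid_between t Ht).
  - rewrite (phi1_affine sys' p q p_ge0 p_lt_q q_leT phi1_nz _ mid_between t Ht).
    unfold s1. ring.
Qed.

Lemma regular_sign_open t : p < t < q -> 0 < s1 * phi1 t /\ 0 < s2 * phi2 t.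
Proof.
  intros Ht. split.
  - exact (phi2_sign_on sys' p q p_ge0 p_lt_q q_leT phi1_nz _ mid_between t Ht).
  - exact (phi2_sign_on sys p q p_ge0 p_lt_q q_leT phi2_nz _ mid_between t Ht).
Qed.

Lemma regular_sign_closed t : p <= t <= q -> 0 <= s1 * phi1 t /\ 0 <= s2 * phi2 t.
Proof.
  intros Ht. split.
  - apply (affine_nonneg_closure (fun x => s1 * phi1 x) (s1 * phi1 p) (2 * L * s1 * s2) p q);
      auto.
    + intros x Hx. destruct (regular_phi_affine x Hx) as [-> _]. ring.
    + intros x Hx. apply regular_sign_open; auto.
  - apply (affine_nonneg_closure (fun x => s2 * phi2 x) (s2 * phi2 p) (- (2 * L * s1 * s2)) p q);
      auto.
    + intros x Hx. destruct (regular_phi_affine x Hx) as [_ ->]. ring.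
    + intros x Hx. apply regular_sign_open; auto.
Qed.

Lemma regular_abs_affine : exists k, Rabs k = 2 * Rabs L /\ forall t, p <= t <= q ->
  Rabs (phi1 t) = Rabs (phi1 p) + k * (t - p) /\ Rabs (phi2 t) = Rabs (phi2 p) - k * (t - p).
Proof.
  assert (Hs1 : s1 = 1 \/ s1 = -1) by apply sgn_pm1.
  assert (Hs2 : s2 = 1 \/ s2 = -1) by apply sgn_pm1.
  assert (Habs : forall t, p <= t <= q -> Rabs (phi1 t) = s1 * phi1 t /\ Rabs (phi2 t) = s2 * phi2 t).
  { intros t Ht. destruct (regular_sign_closed t Ht).
    split; apply Rabs_of_sign; auto. }
  exists (2 * L * s1 * s2). split.
  - assert (Hm1 : Rabs (-1) = 1) by (rewrite Rabs_left; lra).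
    rewrite !Rabs_mult, (Rabs_right 2) by lra.
    destruct Hs1 as [-> | ->], Hs2 as [-> | ->]; rewrite ?Hm1, ?Rabs_R1; ring.
  - intros t Ht. destruct (Habs t Ht) as [-> ->]. destruct (Habs p ltac:(lra)) as [-> ->].
    destruct (regular_phi_affine t Ht) as [-> ->].
    destruct Hs1 as [-> | ->], Hs2 as [-> | ->]; split; ring.
Qed.

Lemma arc_length_le : 2 * Rabs L * (q - p) <= lam0.
Proof.
  destruct regular_abs_affine as (k & Hk & Hak).
  destruct (Hak q ltac:(lra)) as [E1 E2].
  pose proof (sw_norm sys p ltac:(lra)).
  pose proof (Rabs_pos (phi1 q)). pose proof (Rabs_pos (phi2 q)).
  pose proof (Rabs_pos (phi1 p)). pose proof (Rabs_pos (phi2 p)).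
  rewrite <- Hk. unfold Rabs at 1; destruct Rcase_abs; nra.
Qed.

Lemma arc_from_phi1_zero : phi1 p = 0 ->
  phi1 q <> 0 /\ (switching_time phi1 phi2 q -> phi2 q = 0 /\ 2 * Rabs L * (q - p) = lam0).
Proof.
  intros H0.
  destruct regular_abs_affine as (k & Hk & Hak).
  destruct (Hak q ltac:(lra)) as [E1 E2]. destruct (Hak (mid p q) ltac:(unfold mid; lra)) as [Em _].
  rewrite H0, Rabs_R0 in E1, Em.
  assert (Hkpos : 0 < k).
  { assert (0 < Rabs (phi1 (mid p q))) by (apply Rabs_pos_lt, reg; unfold mid; lra).
    unfold mid in *. nra. }
  rewrite Rabs_right in Hk by lra.
  pose proof (sw_norm sys p ltac:(lra)) as Hnp.
  rewrite H0, Rabs_R0, Rplus_0_l in Hnp.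
  assert (Hq1 : phi1 q <> 0).
  { intros Z. rewrite Z, Rabs_R0 in E1. nra. }
  split; auto. intros [Z|Z]; [contradiction|]. split; auto.
  rewrite Z, Rabs_R0 in E2. rewrite <- Hk. lra.
Qed.

Lemma regular_controls t : p < t < q -> ~ N t -> u1 t = s1 /\ u2 t = s2.
Proof.
  intros Ht HNt. split.
  - exact (u2_on sys' p q p_ge0 p_lt_q q_leT phi1_nz _ mid_between t Ht HNt).
  - exact (u2_on sys p q p_ge0 p_lt_q q_leT phi2_nz _ mid_between t Ht HNt).
Qed.

End Arc.

Lemma junction_phi1_zero p z r : 0 <= p -> p < z -> z < r -> r <= T ->
  regular_interval phi1 phi2 p z -> regular_interval phi1 phi2 z r -> phi1 z = 0 ->
  sgn (phi1 (mid p z)) <> sgn (phi1 (mid z r)) /\ sgn (phi2 (mid p z)) = sgn (phi2 (mid z r)).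
Proof.
  intros Hp Hpz Hzr HrT Hl Hr H0.
  assert (Hz2 : phi2 z <> 0) by (apply switching_not_both; auto; lra).
  assert (Hsame : forall s, s = 1 \/ s = -1 -> 0 <= s * phi2 z -> s = sgn (phi2 z)).
  { intros s Hs Hsz. symmetry. apply sgn_of_mul_pos; auto.
    destruct Hs as [-> | ->]; lra. }
  assert (E2 : sgn (phi2 (mid p z)) = sgn (phi2 (mid z r))).
  { rewrite (Hsame (sgn (phi2 (mid p z)))), (Hsame (sgn (phi2 (mid z r)))); auto using sgn_pm1.
    - apply (regular_sign_closed z r); auto; lra.
    - apply (regular_sign_closed p z); auto; lra. }
  split; [|exact E2].
  apply sgn_neq_of_mul_neg.
  set (s2 := sgn (phi2 (mid p z))) in *.
  destruct (regular_phi_affine p z Hp Hpz ltac:(lra) Hl (mid p z) ltac:(unfold mid; lra)) as [El _].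
  destruct (regular_phi_affine p z Hp Hpz ltac:(lra) Hl z ltac:(lra)) as [Ez _].
  destruct (regular_phi_affine z r ltac:(lra) Hzr HrT Hr (mid z r) ltac:(unfold mid; lra)) as [Er _].
  rewrite <- E2 in Er. fold s2 in El, Ez, Er.
  assert (Hl0 : phi1 (mid p z) <> 0) by (apply Hl; unfold mid; lra).
  assert (Hr0 : phi1 (mid z r) <> 0) by (apply Hr; unfold mid; lra).
  set (c := 2 * L * s2) in *.
  assert (El' : phi1 (mid p z) = c * (mid p z - z)) by lra.
  assert (Er' : phi1 (mid z r) = c * (mid z r - z)) by lra.
  assert (Hprod : phi1 (mid p z) * phi1 (mid z r) <= 0).
  { rewrite El', Er'.
    replace (c * (mid p z - z) * (c * (mid z r - z)))
      with (- (c * c) * ((z - mid p z) * (mid z r - z))) by ring.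
    assert (0 <= c * c) by nra.
    assert (0 <= (z - mid p z) * (mid z r - z)) by (unfold mid; nra).
    nra. }
  destruct (Rle_lt_or_eq_dec _ _ Hprod) as [|Hz]; auto.
  apply Rmult_integral in Hz. tauto.
Qed.

Lemma regular_start_of_phi2_nz p : L <> 0 -> 0 <= p < T -> phi2 p <> 0 ->
  exists q, p < q <= T /\ regular_interval phi1 phi2 p q.
Proof.
  intros HL Hp H2.
  destruct (abs_cont_on_nonzero_right T phi2 p (sw_ac2 sys) Hp H2)
    as (q2 & Hq2 & Hnz2).
  destruct (Req_dec (phi1 p) 0) as [H1|H1].
  - exists q2. split; auto. intros t Ht. split; [|auto].
    assert (Hm : p < mid p q2 < q2) by (unfold mid; lra).
    rewrite (phi1_affine sys p q2 ltac:(lra) ltac:(lra) ltac:(lra) Hnz2 _ Hm t)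
      by lra.
    rewrite H1, Rplus_0_l.
    destruct (sgn_pm1 (phi2 (mid p q2))) as [-> | ->];
      repeat apply Rmult_integral_contrapositive_currified; lra.
  - destruct (abs_cont_on_nonzero_right T phi1 p (sw_ac1 sys) Hp H1)
      as (q1 & Hq1 & Hnz1).
    exists (Rmin q1 q2). pose proof (Rmin_l q1 q2). pose proof (Rmin_r q1 q2).
    split; [split; [apply Rmin_glb_lt|]; lra|].
    intros t Ht. split; [apply Hnz1|apply Hnz2]; lra.
Qed.

Lemma phi_constant_of_L0 t : L = 0 -> 0 <= t <= T -> phi1 t = phi1 0 /\ phi2 t = phi2 0.
Proof.
  intros HL Ht.
  enough (phi1 t - phi1 0 = 0 * (t - 0) /\ phi2 t - phi2 0 = 0 * (t - 0)) by lra.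
  pose proof (sw_ac1 sys). pose proof (sw_ac2 sys). pose proof (sw_null sys).
  split; apply (abs_cont_on_deriv_const T _ N 0 t); auto; try lra; intros r Hr HNr.
  - replace 0 with (2 * L * u2 r) by (rewrite HL; ring). apply (sw_deriv1 sys); auto; lra.
  - replace 0 with (- (2 * L * u1 r)) by (rewrite HL; ring). apply (sw_deriv2 sys); auto; lra.
Qed.

End TwoSided.

(** * Decomposition into arcs *)

Definition arc_duration (L lam0 : R) : R := lam0 / (2 * Rabs L).

Lemma arc_duration_spec L lam0 D : L <> 0 -> 2 * Rabs L * D = lam0 -> D = arc_duration L lam0.
Proof. intros HL HD. unfold arc_duration. rewrite <- HD. field. apply Rabs_no_R0; auto. Qed.

Lemma arc_duration_le L lam0 D : L <> 0 -> 2 * Rabs L * D <= lam0 -> D <= arc_duration L lam0.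
Proof.
  intros HL HD. unfold arc_duration. pose proof (Rabs_pos_lt L HL).
  apply (Rmult_le_reg_l (2 * Rabs L)); [lra|]. field_simplify; lra.
Qed.

Lemma arc_duration_pos L lam0 : L <> 0 -> 0 < lam0 -> 0 < arc_duration L lam0.
Proof.
  intros HL Hl0. unfold arc_duration. pose proof (Rabs_pos_lt L HL).
  apply Rdiv_lt_0_compat; lra.
Qed.

Lemma archimedean_step X s : 0 < s -> 0 < X -> exists m : nat, INR m * s < X <= INR (S m) * s.
Proof.
  intros Hs HX.
  destruct (archimed_cor1 (s / X) ltac:(apply Rdiv_lt_0_compat; lra)) as (M & HM & HM0).
  assert (HXM : X <= INR M * s).
  { assert (HMpos : 0 < INR M) by (apply lt_0_INR; lia).
    apply (Rmult_lt_compat_r X) in HM; [|lra].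
    replace (s / X * X) with s in HM by (field; lra).
    replace X with (INR M * (/ INR M * X)) by (field; lra).
    apply Rmult_le_compat_l; lra. }
  clear HM HM0. induction M as [|M IH].
  - simpl in HXM. lra.
  - destruct (Rle_dec X (INR M * s)) as [H|H]; auto. exists M. lra.
Qed.

Definition switching_partition (T : R) (phi1 phi2 : R -> R) (n : nat) (tt : nat -> R) : Prop :=
  (1 <= n)%nat /\ tt O = 0 /\ tt n = T /\
  (forall i, (i < n)%nat ->
     0 <= tt i /\ tt i < tt (S i) /\ tt (S i) <= T /\ regular_interval phi1 phi2 (tt i) (tt (S i))) /\
  (forall i, (0 < i)%nat -> (i < n)%nat -> switching_time phi1 phi2 (tt i)).

Definition arc_control (phi1 phi2 : R -> R) (tt : nat -> R) (i : nat) : R * R :=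
  (sgn (phi1 (mid (tt i) (tt (S i)))), sgn (phi2 (mid (tt i) (tt (S i))))).

Section Partition.

Context {T : R} {phi1 phi2 u1 u2 : R -> R} {N : R -> Prop} {L lam0 : R}.
Hypothesis sys : switching_system T phi1 phi2 u1 u2 N L lam0.

Let sys' : switching_system T phi2 phi1 u2 u1 N (- L) lam0 :=
  switching_system_swap sys.

Notation regular := (regular_interval phi1 phi2).
Notation switching := (switching_time phi1 phi2).
Notation partition := (switching_partition T phi1 phi2).
Notation arc_control := (arc_control phi1 phi2).

Lemma arc_between_switches p q : 0 <= p -> p < q -> q <= T -> regular p q ->
  switching p -> switching q ->
  2 * Rabs L * (q - p) = lam0 /\ (phi1 p = 0 <-> phi2 q = 0).
Proof.
  intros Hp Hpq HqT Hreg Zp Zq.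
  destruct (Req_dec (phi1 p) 0) as [H1|H1].
  - destruct (arc_from_phi1_zero sys p q Hp Hpq HqT Hreg H1) as [_ Hq].
    destruct (Hq Zq). tauto.
  - destruct Zp as [|H2]; [contradiction|].
    destruct (arc_from_phi1_zero sys' p q Hp Hpq HqT
                (regular_interval_swap _ _ _ _ Hreg) H2) as [Hq2 Hq].
    rewrite Rabs_Ropp in Hq. destruct Hq as [Hq1 Hlen]; [destruct Zq; [right|left]; auto|].
    split; auto. split; [contradiction|]. intros Z; contradiction.
Qed.

Lemma regular_start p : L <> 0 -> 0 <= p < T -> exists q, p < q <= T /\ regular p q.
Proof.
  intros HL Hp.
  destruct (Req_dec (phi2 p) 0) as [H2|H2].
  - assert (H1 : phi1 p <> 0).
    { intros H1. apply (switching_not_both sys p ltac:(lra) H1 H2). }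
    destruct (regular_start_of_phi2_nz sys' p ltac:(lra) Hp H1) as (q & Hq & Hreg).
    exists q. split; auto. apply regular_interval_swap; auto.
  - apply (regular_start_of_phi2_nz sys); auto.
Qed.

Lemma regular_extend p : L <> 0 -> 0 <= p < T ->
  exists q, p < q <= T /\ regular p q /\ (q = T \/ switching q).
Proof.
  intros HL Hp.
  set (A := fun q => p < q <= T /\ regular p q).
  destruct (regular_start p HL Hp) as (q0 & Hq0 & Hreg0).
  destruct (completeness A) as [s Hs].
  { exists T. intros x [Hx _]; lra. }
  { exists q0; split; auto. }
  assert (Hq0s : q0 <= s) by (apply (proj1 Hs); split; auto).
  assert (HsT : s <= T) by (apply (proj2 Hs); intros x [Hx _]; lra).
  assert (Hreg : regular p s).
  { intros t Ht. destruct (is_lub_approx A s Hs (s - t)) as (x & [Hx Hregx] & Hx1 & Hx2); [lra|].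
    apply Hregx; lra. }
  exists s. split; [lra|split; auto].
  destruct (Req_dec s T) as [|HsT']; [left; auto|right].
  apply NNPP. intros Hn. apply not_or_and in Hn. destruct Hn as [H1 H2].
  destruct (abs_cont_on_nonzero_right T phi1 s (sw_ac1 sys) ltac:(lra) H1) as (r1 & Hr1 & Hnz1).
  destruct (abs_cont_on_nonzero_right T phi2 s (sw_ac2 sys) ltac:(lra) H2) as (r2 & Hr2 & Hnz2).
  pose proof (Rmin_l r1 r2). pose proof (Rmin_r r1 r2).
  assert (HA : A (Rmin r1 r2)).
  { split; [split; [apply Rmin_glb_lt|]; lra|]. intros t Ht.
    destruct (Rlt_le_dec t s) as [Hts|Hst]; [apply Hreg; lra|].
    destruct (Req_dec t s) as [->|Hts]; [auto|].
    split; [apply Hnz1|apply Hnz2]; lra. }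
  pose proof (proj1 Hs _ HA). pose proof (Rmin_glb_lt r1 r2 s). lra.
Qed.

Lemma arc_after_switch z : L <> 0 -> 0 <= z < T -> switching z ->
  (z + arc_duration L lam0 < T -> regular z (z + arc_duration L lam0) /\
                                  switching (z + arc_duration L lam0)) /\
  (T <= z + arc_duration L lam0 -> regular z T).
Proof.
  intros HL Hz Zz.
  destruct (regular_extend z HL Hz) as (q & Hq & Hreg & Hend).
  assert (Hle : q - z <= arc_duration L lam0)
    by (apply arc_duration_le, (arc_length_le sys); auto; lra).
  assert (Heq : switching q -> q = z + arc_duration L lam0).
  { intros Zq. enough (q - z = arc_duration L lam0) by lra.
    apply arc_duration_spec; auto. apply (arc_between_switches z q); auto; lra. }
  split; intros Hlt.
  - destruct Hend as [->|Zq]; [lra|]. rewrite <- (Heq Zq). auto.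
  - destruct Hend as [<-|Zq]; auto. specialize (Heq Zq). replace T with q by lra. auto.
Qed.

Lemma switching_grid z0 : L <> 0 -> 0 <= z0 -> switching z0 -> forall j : nat,
  z0 + INR j * arc_duration L lam0 < T -> switching (z0 + INR j * arc_duration L lam0).
Proof.
  intros HL Hz0 Z0. pose proof (arc_duration_pos L lam0 HL (sw_lam0_pos sys)) as Hs.
  induction j as [|j IH]; intros Hj.
  - rewrite Rmult_0_l, Rplus_0_r. auto.
  - rewrite S_INR in *.
    assert (0 <= INR j * arc_duration L lam0) by (apply Rmult_le_pos; [apply pos_INR|lra]).
    replace (z0 + (INR j + 1) * arc_duration L lam0)
      with (z0 + INR j * arc_duration L lam0 + arc_duration L lam0) in * by ring.
    apply (arc_after_switch _ HL); [lra|apply IH; lra|lra].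
Qed.

Lemma single_arc_partition : regular 0 T ->
  partition 1 (fun i => match i with O => 0 | _ => T end).
Proof.
  intros Hreg. pose proof (sw_T_pos sys).
  split; [lia|split; [auto|split; [auto|split]]]; [|intros; lia].
  intros i Hi. replace i with O by lia. split; [lra|split; [lra|split; [lra|auto]]].
Qed.

Lemma switching_partition_L0 : L = 0 -> (exists a b, 0 <= a < b /\ b <= T /\ regular a b) ->
  partition 1 (fun i => match i with O => 0 | _ => T end).
Proof.
  intros HL (a & b & Hab & HbT & Hreg). apply single_arc_partition.
  destruct (Hreg (mid a b) ltac:(unfold mid; lra)) as [Hm1 Hm2].
  destruct (phi_constant_of_L0 sys (mid a b) HL ltac:(unfold mid; lra)) as [E1 E2].
  intros t Ht. destruct (phi_constant_of_L0 sys t HL ltac:(lra)) as [-> ->].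
  rewrite <- E1, <- E2. auto.
Qed.

(* After the first switching time [q1], the switching times are [q1 + j s] for [s] the arc
   duration, as long as they stay below [T]. *)
Lemma partition_after_first_switch q1 : L <> 0 -> 0 < q1 < T -> regular 0 q1 -> switching q1 ->
  exists n tt, partition n tt.
Proof.
  intros HL Hq1 Hreg1 Z1.
  set (s := arc_duration L lam0).
  pose proof (arc_duration_pos L lam0 HL (sw_lam0_pos sys)) as Hs. fold s in Hs.
  destruct (archimedean_step (T - q1) s Hs ltac:(lra)) as (m & Hm1 & Hm2).
  rewrite S_INR in Hm2.
  set (z := fun j : nat => q1 + INR j * s).
  assert (Hz_ge : forall j, q1 <= z j)
    by (intros j; unfold z; pose proof (pos_INR j); nra).
  assert (Hz_lt : forall j, (j <= m)%nat -> z j < T).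
  { intros j Hj. unfold z. pose proof (le_INR _ _ Hj). nra. }
  assert (HzS : forall j, z (S j) = z j + s) by (intros j; unfold z; rewrite S_INR; ring).
  assert (Hsw : forall j, (j <= m)%nat -> switching (z j))
    by (intros j Hj; apply (switching_grid q1 HL ltac:(lra) Z1 j), Hz_lt, Hj).
  assert (Hafter : forall j, (j <= m)%nat ->
    (z j + s < T -> regular (z j) (z j + s) /\ switching (z j + s)) /\
    (T <= z j + s -> regular (z j) T)).
  { intros j Hj. pose proof (Hz_ge j). pose proof (Hz_lt j Hj).
    apply arc_after_switch; auto; lra. }
  exists (S (S m)), (fun i => match i with O => 0 | S j => Rmin T (z j) end).
  assert (Htt : forall j, (j <= m)%nat -> Rmin T (z j) = z j)
    by (intros j Hj; apply Rmin_right; pose proof (Hz_lt j Hj); lra).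
  assert (HttT : Rmin T (z (S m)) = T)
    by (apply Rmin_left; rewrite HzS; unfold z; lra).
  split; [lia|split; [auto|split; [auto|split]]].
  - intros [|j] Hj; simpl.
    + rewrite Htt by lia. unfold z at 1 2 3. rewrite Rmult_0_l, Rplus_0_r.
      split; [lra|split; [lra|split; [lra|auto]]].
    + rewrite Htt by lia. pose proof (Hz_ge j) as Hj1.
      destruct (Nat.eq_dec j m) as [->|Hjm].
      * rewrite HttT. pose proof (Hz_lt m (le_n m)).
        split; [lra|split; [lra|split; [lra|]]].
        apply (proj2 (Hafter m (le_n m))). unfold z; lra.
      * rewrite Htt, HzS by lia. pose proof (Hz_lt (S j) ltac:(lia)) as Hj2.
        rewrite HzS in Hj2. split; [lra|split; [lra|split; [lra|]]].
        apply (proj1 (Hafter j ltac:(lia))); lra.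
  - intros [|j] Hi Hin; [lia|]. simpl. rewrite Htt by lia. apply Hsw; lia.
Qed.

Lemma switching_partition_Lnz : L <> 0 -> exists n tt, partition n tt.
Proof.
  intros HL. pose proof (sw_T_pos sys).
  destruct (regular_extend 0 HL ltac:(lra)) as (q1 & Hq1 & Hreg1 & Hend).
  destruct (Req_dec q1 T) as [Hq1T|Hq1T].
  - exists 1%nat, (fun i => match i with O => 0 | _ => T end).
    apply single_arc_partition. rewrite <- Hq1T. auto.
  - destruct Hend as [|Z1]; [contradiction|].
    apply (partition_after_first_switch q1); auto; lra.
Qed.

Lemma switching_partition_exists : (exists a b, 0 <= a < b /\ b <= T /\ regular a b) ->
  exists n tt s, partition n tt /\ 0 < s /\
    (forall i, (i < n)%nat -> tt (S i) - tt i <= s) /\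
    (forall i, (0 < i)%nat -> (S i < n)%nat -> tt (S i) - tt i = s).
Proof.
  intros Harc. pose proof (sw_T_pos sys).
  destruct (Req_dec L 0) as [HL|HL].
  - exists 1%nat, (fun i => match i with O => 0 | _ => T end), T.
    split; [apply switching_partition_L0; auto|].
    split; [auto|split; intros i; [|lia]]. intros Hi. replace i with O by lia. simpl. lra.
  - destruct (switching_partition_Lnz HL) as (n & tt & Hpart).
    exists n, tt, (arc_duration L lam0).
    split; [exact Hpart|].
    destruct Hpart as (_ & _ & _ & Harcs & Hsw).
    split; [apply arc_duration_pos; auto; apply (sw_lam0_pos sys)|split].
    + intros i Hi. destruct (Harcs i Hi) as (Hi0 & Hi1 & Hi2 & Hreg).
      apply arc_duration_le, (arc_length_le sys); auto.
    + intros i Hi Hin. destruct (Harcs i ltac:(lia)) as (Hi0 & Hi1 & Hi2 & Hreg).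
      apply arc_duration_spec; auto.
      apply (arc_between_switches (tt i) (tt (S i))); auto; apply Hsw; lia.
Qed.

Lemma partition_arc_control n tt i : partition n tt -> (i < n)%nat ->
  ae_on (tt i) (tt (S i)) (fun t => u1 t = fst (arc_control tt i) /\ u2 t = snd (arc_control tt i)).
Proof.
  intros (_ & _ & _ & Harcs & _) Hi. destruct (Harcs i Hi) as (Hi0 & Hi1 & Hi2 & Hreg).
  exists (fun t => N t \/ t = tt i \/ t = tt (S i)).
  split; [apply null_set_add_points, (sw_null sys)|].
  intros t Ht HNt. apply (regular_controls sys (tt i) (tt (S i))); auto.
  split; apply Rnot_le_lt; intro; apply HNt; right; lra.
Qed.

Lemma partition_junction n tt i : partition n tt -> (0 < i)%nat -> (i < n)%nat ->
  (fst (arc_control tt (pred i)) <> fst (arc_control tt i) <-> phi1 (tt i) = 0) /\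
  (snd (arc_control tt (pred i)) <> snd (arc_control tt i) <-> phi2 (tt i) = 0).
Proof.
  intros (_ & _ & _ & Harcs & Hsw) Hi Hin. destruct i as [|j]; [lia|]. simpl.
  destruct (Harcs j ltac:(lia)) as (Hj0 & Hj1 & Hj2 & Hregl).
  destruct (Harcs (S j) Hin) as (_ & Hj3 & Hj4 & Hregr).
  assert (Hnb : phi1 (tt (S j)) = 0 -> phi2 (tt (S j)) <> 0)
    by (apply (switching_not_both sys); lra).
  destruct (Hsw (S j) Hi Hin) as [Z|Z].
  - destruct (junction_phi1_zero sys _ _ _ Hj0 Hj1 Hj3 Hj4 Hregl Hregr Z).
    specialize (Hnb Z). tauto.
  - destruct (junction_phi1_zero sys' _ _ _ Hj0 Hj1 Hj3 Hj4
                (regular_interval_swap _ _ _ _ Hregl) (regular_interval_swap _ _ _ _ Hregr) Z).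
    assert (phi1 (tt (S j)) <> 0) by (intros Z1; exact (Hnb Z1 Z)). tauto.
Qed.

Lemma partition_one_flip n tt i : partition n tt -> (0 < i)%nat -> (i < n)%nat ->
  (fst (arc_control tt (pred i)) <> fst (arc_control tt i) <->
   snd (arc_control tt (pred i)) = snd (arc_control tt i)).
Proof.
  intros Hpart Hi Hin. pose proof (partition_junction n tt i Hpart Hi Hin) as [J1 J2].
  destruct Hpart as (_ & _ & _ & Harcs & Hsw). destruct (Harcs i Hin) as (Hi0 & Hi1 & Hi2 & _).
  pose proof (switching_not_both sys (tt i) ltac:(lra)).
  destruct (Hsw i Hi Hin); split; intros; apply NNPP; tauto.
Qed.

Lemma partition_flips_alternate n tt i : partition n tt -> (0 < i)%nat -> (S i < n)%nat ->
  (fst (arc_control tt (pred i)) <> fst (arc_control tt i) <->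
   snd (arc_control tt i) <> snd (arc_control tt (S i))).
Proof.
  intros Hpart Hi Hin.
  destruct (partition_junction n tt i Hpart Hi ltac:(lia)) as [J1 _].
  destruct (partition_junction n tt (S i) Hpart ltac:(lia) Hin) as [_ J2]. simpl in J2.
  destruct Hpart as (_ & _ & _ & Harcs & Hsw). destruct (Harcs i ltac:(lia)) as (Hi0 & Hi1 & Hi2 & Hreg).
  destruct (arc_between_switches (tt i) (tt (S i))) as [_ Halt]; auto; try (apply Hsw; lia).
  rewrite J1, J2. exact Halt.
Qed.

End Partition.

(** * Extremals of the structure *)

Lemma derivable_pt_lim_congr f g x l l' :
  (forall z, f z = g z) -> l = l' -> derivable_pt_lim f x l -> derivable_pt_lim g x l'.
Proof. intros Hfg <-. apply derivable_pt_lim_ext; auto. Qed.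

Lemma derivable_pt_lim_affine A B x : derivable_pt_lim (fun y => A + B * y) x B.
Proof.
  apply (derivable_pt_lim_congr (fct_cte A + mult_real_fct B id)%F _ x (0 + B * 1));
    [reflexivity|ring|].
  apply derivable_pt_lim_plus; [apply derivable_pt_lim_const|].
  apply derivable_pt_lim_scal, derivable_pt_lim_id.
Qed.

Lemma Ham_partials (l p v : R * R) dx dy dl1 :
  derivable_pt_lim (fun x => Ham l (x, snd p) v) (fst p) dx ->
  derivable_pt_lim (fun y => Ham l (fst p, y) v) (snd p) dy ->
  derivable_pt_lim (fun a => Ham (a, snd l) p v) (fst l) dl1 ->
  dx = (fst v - snd v) * snd l /\ dy = 0 /\ dl1 = fst v + snd v.
Proof.
  unfold Ham, pairing, Y1, Y2; simpl. intros Dx Dy Dl. split; [|split].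
  - apply (uniqueness_limite _ _ _ _ Dx).
    apply (derivable_pt_lim_ext (fun x => (fst v + snd v) * fst l + (fst v - snd v) * snd l * x));
      [intros; ring|apply derivable_pt_lim_affine].
  - apply (uniqueness_limite _ _ _ _ Dy).
    apply (derivable_pt_lim_ext (fun y => Ham l p v + 0 * y));
      [intros; unfold Ham, pairing, Y1, Y2; simpl; ring|apply derivable_pt_lim_affine].
  - apply (uniqueness_limite _ _ _ _ Dl).
    apply (derivable_pt_lim_ext (fun a => (fst v - snd v) * snd l * fst p + (fst v + snd v) * a));
      [intros; ring|apply derivable_pt_lim_affine].
Qed.

Lemma continuity_ae_const h N T c : continuity h -> 0 < T -> null_set N ->
  (forall t, 0 <= t <= T -> ~ N t -> h t = c) -> forall t, 0 <= t <= T -> h t = c.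
Proof.
  intros Hh HT HN Hae t0 Ht0. apply NNPP. intros Hne.
  destruct (continuity_pt_neq h t0 c (Hh t0) Hne) as (d & Hd & Hnear).
  set (p := Rmax 0 (t0 - d / 2)). set (q := Rmin T (t0 + d / 2)).
  assert (Hp : 0 <= p /\ t0 - d / 2 <= p /\ p <= t0) by (unfold p, Rmax; destruct Rle_dec; lra).
  assert (Hq : q <= T /\ q <= t0 + d / 2 /\ t0 <= q) by (unfold q, Rmin; destruct Rle_dec; lra).
  assert (Hpq : p < q) by (unfold p, q, Rmax, Rmin; repeat destruct Rle_dec; lra).
  destruct (null_set_compl_dense N p q HN ltac:(lra) Hpq) as (t & Ht & HNt).
  apply (Hnear t); [apply Rabs_def1; lra|]. apply Hae; auto; lra.
Qed.

Lemma extremal_pair_ae T gamma u lam : extremal_pair T gamma u lam ->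
  exists N lam0, null_set N /\ forall t, 0 <= t <= T -> ~ N t ->
    Rabs (fst (u t)) <= 1 /\ Rabs (snd (u t)) <= 1 /\
    Ham (lam t) (gamma t) (u t) = lam0 /\
    Rabs (phi1 gamma lam t) + Rabs (phi2 gamma lam t) = lam0 /\
    derivable_pt_lim (fun s => fst (lam s)) t (- ((fst (u t) - snd (u t)) * snd (lam t))) /\
    derivable_pt_lim (fun s => snd (lam s)) t 0 /\
    derivable_pt_lim (fun s => fst (gamma s)) t (fst (u t) + snd (u t)).
Proof.
  intros ((_ & _ & _ & _ & (N1 & HN1 & Hbound) & _) & _ & _ & _ & (N2 & HN2 & Hham) &
          lam0 & _ & (N3 & HN3 & Hmax)).
  exists (fun t => N1 t \/ N2 t \/ N3 t), lam0.
  split; [apply null_set_union; [|apply null_set_union]; auto|].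
  intros t Ht HNt.
  destruct (Hbound t Ht ltac:(tauto)) as [B1 B2].
  destruct (Hmax t Ht ltac:(tauto)) as [M1 M2].
  destruct (Hham t Ht ltac:(tauto))
    as (dx & dy & dl1 & dl2 & Dx & Dy & Dl1 & _ & Dlam1 & Dlam2 & Dgam1 & _).
  destruct (Ham_partials _ _ _ _ _ _ Dx Dy Dl1) as (-> & -> & ->).
  repeat split; auto.
  rewrite Ropp_0 in Dlam2. auto.
Qed.

Lemma extremal_lam2_constant T gamma u lam : extremal_pair T gamma u lam ->
  forall t, 0 <= t <= T -> snd (lam t) = snd (lam 0).
Proof.
  intros Hext t Ht. pose proof Hext as (_ & _ & Hlam2 & _).
  destruct (extremal_pair_ae T gamma u lam Hext) as (N & lam0 & HN & Hae).
  enough (snd (lam t) - snd (lam 0) = 0 * (t - 0)) by lra.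
  apply (abs_cont_on_deriv_const T (fun s => snd (lam s)) N 0 t); auto; try lra.
  intros s Hs HNs. apply (Hae s ltac:(lra) HNs).
Qed.

Lemma switching_functions_abs_cont T (gamma lam : R -> R * R) L :
  abs_cont_on T (fun t => fst (lam t)) -> abs_cont_on T (fun t => fst (gamma t)) ->
  (forall t, 0 <= t <= T -> snd (lam t) = L) ->
  abs_cont_on T (phi1 gamma lam) /\ abs_cont_on T (phi2 gamma lam).
Proof.
  intros Hlam1 Hgam1 HL. split.
  - apply (abs_cont_on_ext T (fun t => fst (lam t) + L * fst (gamma t))).
    + intros t Ht. unfold phi1, pairing, Y1; simpl. rewrite HL by auto. ring.
    + apply abs_cont_on_plus, abs_cont_on_scal; auto.
  - apply (abs_cont_on_ext T (fun t => fst (lam t) + - L * fst (gamma t))).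
    + intros t Ht. unfold phi2, pairing, Y2; simpl. rewrite HL by auto. ring.
    + apply abs_cont_on_plus, abs_cont_on_scal; auto.
Qed.

Lemma switching_functions_derivable (gamma lam : R -> R * R) t v1 v2 :
  derivable_pt_lim (fun s => fst (lam s)) t (- ((v1 - v2) * snd (lam t))) ->
  derivable_pt_lim (fun s => snd (lam s)) t 0 ->
  derivable_pt_lim (fun s => fst (gamma s)) t (v1 + v2) ->
  derivable_pt_lim (phi1 gamma lam) t (2 * snd (lam t) * v2) /\
  derivable_pt_lim (phi2 gamma lam) t (- (2 * snd (lam t) * v1)).
Proof.
  intros D1 D2 D3. split.
  - eapply (derivable_pt_lim_congr (fun s => fst (lam s) + snd (lam s) * fst (gamma s)));
      [intros; unfold phi1, pairing, Y1; simpl; ring| |].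
    2:{ apply derivable_pt_lim_plus; [exact D1|]. apply (derivable_pt_lim_mult _ _ _ _ _ D2 D3). }
    ring.
  - eapply (derivable_pt_lim_congr (fun s => fst (lam s) + snd (lam s) * - fst (gamma s)));
      [intros; unfold phi2, pairing, Y2; simpl; ring| |].
    2:{ apply derivable_pt_lim_plus; [exact D1|].
        apply (derivable_pt_lim_mult _ _ _ _ _ D2 (derivable_pt_lim_opp _ _ _ D3)). }
    ring.
Qed.

Lemma extremal_switching_system T gamma u lam :
  extremal_pair T gamma u lam -> (exists a b, regular_arc T gamma lam a b) ->
  exists N L lam0, switching_system T (phi1 gamma lam) (phi2 gamma lam)
                     (fun t => fst (u t)) (fun t => snd (u t)) N L lam0.
Proof.
  intros Hext (a & b & (Ha & Hab & HbT & Hreg) & _).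
  assert (HT : 0 <= T) by lra.
  pose proof Hext as ((Hgam1 & _) & Hlam1 & _).
  destruct (extremal_pair_ae T gamma u lam Hext) as (N & lam0 & HN & Hae).
  pose proof (extremal_lam2_constant T gamma u lam Hext) as HL.
  destruct (switching_functions_abs_cont T gamma lam _ Hlam1 Hgam1 HL) as [Hac1 Hac2].
  assert (Hl0 : 0 < lam0).
  { destruct (null_set_compl_dense N a b HN Ha Hab) as (t & Ht & HNt).
    destruct (Hreg t Ht) as [H1 H2]. destruct (Hae t ltac:(lra) HNt) as (_ & _ & _ & Hn & _).
    pose proof (Rabs_pos_lt _ H1). pose proof (Rabs_pos (phi2 gamma lam t)). lra. }
  exists N, (snd (lam 0)), lam0. split; auto; try lra.
  - intros t0 Ht0.
    set (h := fun t => Rabs (phi1 gamma lam (clamp T t)) + Rabs (phi2 gamma lam (clamp T t))).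
    replace (Rabs (phi1 gamma lam t0) + Rabs (phi2 gamma lam t0)) with (h t0)
      by (unfold h; rewrite clamp_id; auto).
    apply (continuity_ae_const h N T); auto; try lra.
    + apply continuity_plus; apply (continuity_comp _ Rabs);
        auto using Rcontinuity_abs, abs_cont_on_clamp_continuity with real.
    + intros t Ht HNt. unfold h. rewrite clamp_id by auto. apply (Hae t Ht HNt).
  - intros t Ht HNt. destruct (Hae t Ht HNt) as (B1 & B2 & Hmax & _). auto.
  - intros t Ht HNt. destruct (Hae t ltac:(lra) HNt) as (_ & _ & _ & _ & D1 & D2 & D3).
    rewrite <- (HL t) by lra. apply (switching_functions_derivable gamma lam t _ _ D1 D2 D3).
  - intros t Ht HNt. destruct (Hae t ltac:(lra) HNt) as (_ & _ & _ & _ & D1 & D2 & D3).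
    rewrite <- (HL t) by lra. apply (switching_functions_derivable gamma lam t _ _ D1 D2 D3).
Qed.

Lemma regular_arc_of_switching_ends T gamma lam a b : 0 <= a -> a < b -> b <= T ->
  regular_interval (phi1 gamma lam) (phi2 gamma lam) a b ->
  (a = 0 \/ switching_time (phi1 gamma lam) (phi2 gamma lam) a) ->
  (b = T \/ switching_time (phi1 gamma lam) (phi2 gamma lam) b) ->
  regular_arc T gamma lam a b.
Proof.
  intros Ha Hab HbT Hreg Za Zb. split; [split; [auto|split; [auto|split; auto]]|].
  intros a' b' Ha' Hb' (Ha'0 & _ & Hb'T & Hreg').
  split.
  - destruct (Rle_lt_or_eq_dec a' a Ha') as [Hlt|]; auto. exfalso.
    destruct (Hreg' a) as [H1 H2]; [lra|]. destruct Za as [|[Z|Z]]; [lra|auto|auto].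
  - destruct (Rle_lt_or_eq_dec b b' Hb') as [Hlt|]; auto. exfalso.
    destruct (Hreg' b) as [H1 H2]; [lra|]. destruct Zb as [|[Z|Z]]; [lra|auto|auto].
Qed.

Lemma partition_arc_decomposition T gamma lam n tt :
  switching_partition T (phi1 gamma lam) (phi2 gamma lam) n tt -> arc_decomposition T gamma lam n tt.
Proof.
  intros (Hn & H0 & HT & Harcs & Hsw). split; [auto|split; [auto|split; [auto|]]].
  intros i Hi. destruct (Harcs i Hi) as (Hi0 & Hi1 & Hi2 & Hreg).
  apply regular_arc_of_switching_ends; auto.
  - destruct i; [left; auto|right; apply Hsw; lia].
  - destruct (Nat.eq_dec (S i) n) as [<-|]; [left; auto|right; apply Hsw; lia].
Qed.

Theorem mainTheorem7 (T : R) (gamma u lam : R -> R * R) :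
  extremal_pair T gamma u lam ->
  (exists a b, regular_arc T gamma lam a b) ->
  regular_bang_bang T gamma /\
  exists (n : nat) (tt : nat -> R) (c : nat -> R * R) (s : R),
    arc_decomposition T gamma lam n tt /\
    (forall i, (i < n)%nat ->
       pm1 (c i) /\ ae_on (tt i) (tt (S i)) (fun t => u t = c i)) /\
    0 < s /\
    (forall i, (i < n)%nat -> tt (S i) - tt i <= s) /\
    (forall i, (0 < i)%nat -> (S i < n)%nat -> tt (S i) - tt i = s) /\
    (forall i, (0 < i)%nat -> (i < n)%nat ->
       (fst (c (pred i)) <> fst (c i) <-> snd (c (pred i)) = snd (c i))) /\
    (forall i, (0 < i)%nat -> (S i < n)%nat ->
       (fst (c (pred i)) <> fst (c i) <-> snd (c i) <> snd (c (S i)))).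
Proof.
  intros Hext Harc.
  destruct (extremal_switching_system T gamma u lam Hext Harc) as (N & L & lam0 & Hsys).
  destruct (switching_partition_exists Hsys) as (n & tt & s & Hpart & Hs & Hle & Heq).
  { destruct Harc as (a & b & (Ha & Hab & HbT & Hreg) & _). exists a, b. auto. }
  pose proof (partition_arc_decomposition T gamma lam n tt Hpart) as Hdec.
  split; [exists u, lam, n, tt; auto|].
  exists n, tt, (arc_control (phi1 gamma lam) (phi2 gamma lam) tt), s.
  split; [auto|split; [|split; [auto|split; [auto|split; [auto|split]]]]].
  - intros i Hi. split; [split; apply sgn_pm1|].
    destruct (partition_arc_control Hsys n tt i Hpart Hi) as (N' & HN' & Hae).
    exists N'. split; auto. intros t Ht HNt.
    destruct (Hae t Ht HNt) as [E1 E2]. apply injective_projections; [exact E1|exact E2].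
  - intros i. apply (partition_one_flip Hsys n tt i Hpart).
  - intros i. apply (partition_flips_alternate Hsys n tt i Hpart).
Qed.
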